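(* Let $0\le B<B_n$, where $B_n=\dfrac{4\sqrt3}{\sqrt{169+38\sqrt{19}}}$. Put $$Z(r)=2r-3-B^2r^2\Big(\tfrac32 r-\tfrac54\Big),\qquad b(r)=1+\tfrac{B^2r^2}{4},$$ let $(r_1,r_2)=\{r>1: Z(r)>0\}$ (with $r_2=+\infty$ when $B=0$), and for $r_c\in(r_1,r_2)$ define $$L(r_c)=\frac{r_c}{b}\sqrt{\frac{4(b-1)(r_c-1)+b}{Z(r_c)}},\qquad E(r_c)=b\,(r_c-1)\sqrt{\frac{4-B^2r_c^2}{2r_cZ(r_c)}},\qquad b=b(r_c).$$ For $L=L(r_c)$, $E=E(r_c)$ the point $(p_r,p_\theta,r,\theta)=(0,0,r_c,\pi/2)$ is a fixed point of the Hamiltonian system with Hamiltonian $$H=\frac{\Gamma}{2\Lambda^2}p_r^2+\frac{p_\theta^2}{2r^2\Lambda^2}+\frac{L^2\Lambda^2}{2r^2\sin^2\theta}-\frac{E^2}{2\Lambda^2\Gamma},\quad \Lambda=1+\frac{B^2}{4}r^2\sin^2\theta,\quad \Gamma=1-\frac1r,$$ lying on the level set $H=-\tfrac12$. Let $$N(r)=64(r-3)+(4Br)^2(16r^2-39r+21)-4(Br)^4(24r^2-51r+25)+(Br)^6(24r^2-37r+15).$$ Then there is $r_*\in(r_1,r_2)$ with $N(r_* )=0$ such that: for $r_c\in(r_1,r_* )$ this fixed point is unstable, of saddle-center type, and for $r_c\in(r_*,r_2)$ it is stable, of center-center type (the effective potential has a strict minimum there). In particular $r_*=3$ when $B=0$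.
   Context: This is the reduced Hamiltonian system (canonical variables $(p_r,p_\theta,r,\theta)$, $r>1$, $0<\theta<\pi$) for time-like geodesics of neutral particles in the Schwarzschild–Melvin spacetime in dimensionless units (horizon at $r=1$), obtained by eliminating the cyclic coordinates $t,\varphi$ with conserved energy $E>0$ and angular momentum $L>0$; physical trajectories lie on $H=-1/2$. Fixed points with $\theta=\pi/2$ correspond to circular orbits in the equatorial plane. The effective potential is the $p$-independent part of $H$. *)

From Stdlib Require Import Reals.
From Coquelicot Require Import Coquelicot.
From mathcomp Require Import all_boot all_algebra.
From mathcomp Require Import Rstruct.

Set Implicit Arguments.
Unset Strict Implicit.
Unset Printing Implicit Defensive.

Local Open Scope R_scope.

Definition Lam (B r th : R) : R := 1 + B ^ 2 / 4 * r ^ 2 * (sin th) ^ 2.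
Definition Gam (r : R) : R := 1 - 1 / r.

(* Phase-space points are functions 'I_4 -> R with coordinates
   index 0 = p_r, 1 = p_theta, 2 = r, 3 = theta. *)
Definition Ham (B L E : R) (v : 'I_4 -> R) : R :=
  let pr := v (inord 0) in let pth := v (inord 1) in
  let r := v (inord 2) in let th := v (inord 3) in
  Gam r / (2 * (Lam B r th) ^ 2) * pr ^ 2
  + pth ^ 2 / (2 * r ^ 2 * (Lam B r th) ^ 2)
  + L ^ 2 * (Lam B r th) ^ 2 / (2 * r ^ 2 * (sin th) ^ 2)
  - E ^ 2 / (2 * (Lam B r th) ^ 2 * Gam r).

Definition Veff (B L E r th : R) : R :=
  L ^ 2 * (Lam B r th) ^ 2 / (2 * r ^ 2 * (sin th) ^ 2)
  - E ^ 2 / (2 * (Lam B r th) ^ 2 * Gam r).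

Definition Zf (B r : R) : R := 2 * r - 3 - B ^ 2 * r ^ 2 * (3 / 2 * r - 5 / 4).
Definition bf (B r : R) : R := 1 + B ^ 2 * r ^ 2 / 4.

Definition Lc (B rc : R) : R :=
  rc / bf B rc * sqrt ((4 * (bf B rc - 1) * (rc - 1) + bf B rc) / Zf B rc).
Definition Ec (B rc : R) : R :=
  bf B rc * (rc - 1) * sqrt ((4 - B ^ 2 * rc ^ 2) / (2 * rc * Zf B rc)).

Definition Nf (B r : R) : R :=
  64 * (r - 3) + (4 * B * r) ^ 2 * (16 * r ^ 2 - 39 * r + 21)
  - 4 * (B * r) ^ 4 * (24 * r ^ 2 - 51 * r + 25)
  + (B * r) ^ 6 * (24 * r ^ 2 - 37 * r + 15).

Definition Bn : R := 4 * sqrt 3 / sqrt (169 + 38 * sqrt 19).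

Definition eq_point (rc : R) : 'I_4 -> R :=
  fun j => if j == inord 2 then rc else if j == inord 3 then PI / 2 else 0.

Definition upd (v : 'I_4 -> R) (i : 'I_4) (x : R) : 'I_4 -> R :=
  fun j => if j == i then x else v j.
Definition pderiv (i : 'I_4) (f : ('I_4 -> R) -> R) (v : 'I_4 -> R) : R :=
  Derive (fun x => f (upd v i x)) (v i).

Definition hessian (f : ('I_4 -> R) -> R) (v : 'I_4 -> R) : 'M[R]_4 :=
  \matrix_(i < 4, j < 4) pderiv i (pderiv j f) v.

(* Hamilton's equations  dp/dt = - dH/dq,  dq/dt = dH/dp  with x = (p, q). *)
Definition Jsymp : 'M[R]_4 :=
  \matrix_(i < 4, j < 4)
    (if (i < 2)%N && (j == (i + 2)%N :> nat) then -1
     else if (2 <= i)%N && ((j + 2)%N == i :> nat) then 1 else 0).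

Definition linearization (f : ('I_4 -> R) -> R) (v : 'I_4 -> R) : 'M[R]_4 :=
  (Jsymp *m hessian f v)%R.

Definition fixed_point (f : ('I_4 -> R) -> R) (v : 'I_4 -> R) : Prop :=
  forall i : 'I_4, pderiv i f v = 0.

(* Saddle-center: eigenvalues +-l (real, l>0) and +-i w (w>0). *)
Definition saddle_center (A : 'M[R]_4) : Prop :=
  exists l w : R, 0 < l /\ 0 < w /\
    char_poly A = (('X ^+ 2 - (l ^ 2)%:P) * ('X ^+ 2 + (w ^ 2)%:P))%R.

(* Center-center: eigenvalues +-i w1, +-i w2 (w1, w2 > 0). *)
Definition center_center (A : 'M[R]_4) : Prop :=
  exists w1 w2 : R, 0 < w1 /\ 0 < w2 /\
    char_poly A = (('X ^+ 2 + (w1 ^ 2)%:P) * ('X ^+ 2 + (w2 ^ 2)%:P))%R.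

Definition strict_local_min (V : R -> R -> R) (r0 th0 : R) : Prop :=
  exists d : R, 0 < d /\ forall r th, Rabs (r - r0) < d -> Rabs (th - th0) < d ->
    (r, th) <> (r0, th0) -> V r0 th0 < V r th.

(* Write H = P p_r^2 + Q p_theta^2 + V(r, sin^2 theta).  At (0, 0, rc, pi/2) the momentum
   and theta components of the gradient vanish by symmetry, and L, E are exactly the values
   making dV/dr = 0 there, with H = -1/2.  The Hessian at that point is
   diag(2P, 2Q, V_rr, V_thth), so J * Hess has characteristic polynomial
   (X^2 + 2P V_rr)(X^2 + 2Q V_thth).  Along the circular family V_thth = (2 - b)/Z > 0, while
   V_rr is a positive multiple of N(rc): the orbit is center-center where N > 0 and
   saddle-center where N < 0.  N is increasing on (r1, r2), and on the zero set of Z one has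
   (6r - 5)^3 N(r) = 2048 (r - 1)^2 (2r - 1) (12r^2 - 32r + 15); as B < Bn puts the root
   (8 + sqrt 19)/6 of the last factor inside (r1, r2), N < 0 at r1 and N > 0 at r2, which
   yields the unique threshold r*.  For the strict minimum, split
   V(r, th) - V(rc, pi/2) = cos^2 th * G(r, sin^2 th) + (V(r, pi/2) - V(rc, pi/2)),
   where G > 0 near the orbit and the radial part is controlled by V_rr > 0. *)

From Stdlib Require Import Reals Lra Psatz.
From Coquelicot Require Import Coquelicot.
From mathcomp Require Import all_boot all_algebra.
From mathcomp Require Import Rstruct.
From mathcomp Require ring.

Local Open Scope R_scope.

Lemma IVT_strict (f : R -> R) a b :
  continuity f -> a < b -> f a < 0 < f b -> exists c, a < c < b /\ f c = 0.
Proof.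
move=> hf hab [ha hb]; have [c [[hac hcb] hc]] := IVT f a b hf hab ha hb.
exists c; split=> //; split; apply: Rnot_le_lt => h.
- have ec : c = a by lra.
  by rewrite ec in hc; lra.
- have ec : c = b by lra.
  by rewrite ec in hc; lra.
Qed.

Lemma increasing_sign (f : R -> R) a b c :
  (forall x y, a <= x -> x < y -> y <= b -> f x < f y) -> a < c < b -> f c = 0 ->
  (forall x, a < x -> x < c -> f x < 0) /\ (forall x, c < x -> x < b -> 0 < f x).
Proof. by move=> hf hc h0; split=> x h1 h2; rewrite -h0; apply: hf; lra. Qed.

(** * The circular-orbit region and the stability threshold *)

Lemma sqrt19_sq : sqrt 19 * sqrt 19 = 19.
Proof. by apply: sqrt_sqrt; lra. Qed.

Lemma sqrt19_bounds : 4 < sqrt 19 < 5.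
Proof. have e := sqrt19_sq; have h := sqrt_pos 19; nra. Qed.

Lemma Bn_sqr : Bn ^ 2 * (169 + 38 * sqrt 19) = 48.
Proof.
have h19 := sqrt19_bounds; set D := 169 + 38 * sqrt 19.
have h3 : sqrt 3 * sqrt 3 = 3 by apply: sqrt_sqrt; lra.
have hD : sqrt D * sqrt D = D by apply: sqrt_sqrt; rewrite /D; lra.
have hD0 : 0 < sqrt D by apply: sqrt_lt_R0; rewrite /D; lra.
have -> : Bn ^ 2 = 16 * (sqrt 3 * sqrt 3) / (sqrt D * sqrt D) by rewrite /Bn -/D; field; lra.
by rewrite h3 hD; field; rewrite /D; lra.
Qed.

Lemma lt_Bn_sqr B : 0 <= B -> B < Bn -> B ^ 2 * (169 + 38 * sqrt 19) < 48.
Proof.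
move=> h0 h1; have h19 := sqrt19_bounds; have hBn := Bn_sqr.
have : B ^ 2 < Bn ^ 2 by nra.
nra.
Qed.

(* [rB] is the larger root of [12 r^2 - 32 r + 15], the factor deciding the sign of [Nf]
   on the zero set of [Zf] (lemma [Nf_at_Zf_root]); [B < Bn] says exactly that
   [Zf B rB > 0]. *)
Definition rB : R := (8 + sqrt 19) / 6.

Lemma rB_quadratic r : 12 * r ^ 2 - 32 * r + 15 = 12 * (r - rB) * (r - (8 - sqrt 19) / 6).
Proof. by have := sqrt19_sq; rewrite /rB => h19; field_simplify; nra. Qed.

Lemma Zf_rB_pos B : B ^ 2 * (169 + 38 * sqrt 19) < 48 -> 0 < Zf B rB.
Proof.
move=> h; have h19 := sqrt19_bounds; have e19 := sqrt19_sq.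
have -> : Zf B rB = (sqrt 19 - 1) / 3 - B ^ 2 * (sqrt 19 - 1) * (169 + 38 * sqrt 19) / 144.
  rewrite /Zf /rB; field_simplify.
  have -> : sqrt 19 ^ 3 = 19 * sqrt 19 by rewrite /=; nra.
  have -> : sqrt 19 ^ 2 = 19 by rewrite /=; nra.
  by field_simplify; nra.
have hB := pow2_ge_0 B; nra.
Qed.

Lemma Zf_continuous B : continuity (Zf B).
Proof. rewrite /Zf; reg. Qed.

Lemma Nf_continuous B : continuity (Nf B).
Proof. rewrite /Nf; reg. Qed.

Lemma Zf_factor B r1 r2 : Zf B r1 = 0 -> Zf B r2 = 0 -> r1 <> r2 ->
  forall r, Zf B r = - (3 * B ^ 2 / 2) * (r - r1) * (r - r2) * (r - (5 / 6 - r1 - r2)).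
Proof.
move=> h1 h2 hne r.
set a := 2 + 3 / 2 * B ^ 2 * (r1 * r2 + (r1 + r2) * (5 / 6 - r1 - r2)).
set c := -3 - 3 / 2 * B ^ 2 * (r1 * r2 * (5 / 6 - r1 - r2)).
(* the cubic minus the claimed factorisation is affine, and it vanishes at [r1 <> r2] *)
have affine x :
  Zf B x + (3 * B ^ 2 / 2) * (x - r1) * (x - r2) * (x - (5 / 6 - r1 - r2)) = a * x + c.
  by rewrite /Zf /a /c; field.
have k1 := affine r1; have k2 := affine r2; have k := affine r.
rewrite h1 in k1; rewrite h2 in k2.
have ha : a = 0.
  have : a * (r1 - r2) = 0 by nra.
  by case/Rmult_integral => // e; lra.
have hc : c = 0 by rewrite ha in k1; lra.
by rewrite ha hc in k; lra.
Qed.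

Lemma Nf_at_Zf_root B r : Zf B r = 0 ->
  (6 * r - 5) ^ 3 * Nf B r = 2048 * (r - 1) ^ 2 * (2 * r - 1) * (12 * r ^ 2 - 32 * r + 15).
Proof.
move=> hz; have hw : (B ^ 2 * r ^ 2) * (6 * r - 5) = 4 * (2 * r - 3) by rewrite /Zf in hz; nra.
set w := (B ^ 2 * r ^ 2) * (6 * r - 5) in hw.
have -> : (6 * r - 5) ^ 3 * Nf B r =
  64 * (r - 3) * (6 * r - 5) ^ 3 + 16 * w * (6 * r - 5) ^ 2 * (16 * r ^ 2 - 39 * r + 21)
  - 4 * w ^ 2 * (6 * r - 5) * (24 * r ^ 2 - 51 * r + 25) + w ^ 3 * (24 * r ^ 2 - 37 * r + 15).
  by rewrite /w /Nf; field.
by rewrite hw; field.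
Qed.

Lemma Nf_sign_at_Zf_root B r : 3 / 2 < r -> Zf B r = 0 ->
  (r < rB -> Nf B r < 0) /\ (rB < r -> 0 < Nf B r).
Proof.
move=> hr hz; have e := Nf_at_Zf_root B r hz; rewrite rB_quadratic in e.
have h19 := sqrt19_bounds.
set P := (6 * r - 5) ^ 3 in e; set A := 2048 * (r - 1) ^ 2 * (2 * r - 1) in e.
have hP : 0 < P by apply: pow_lt; lra.
have hA : 0 < A.
  by apply: Rmult_lt_0_compat; [apply: Rmult_lt_0_compat; [lra | apply: pow_lt; lra] | lra].
have hr' : 0 < r - (8 - sqrt 19) / 6 by lra.
split=> h.
- have : A * (12 * (r - rB) * (r - (8 - sqrt 19) / 6)) < 0.
    by apply: Rmult_pos_neg => //; nra.
  nra.
- have : 0 < A * (12 * (r - rB) * (r - (8 - sqrt 19) / 6)).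
    by apply: Rmult_lt_0_compat => //; nra.
  nra.
Qed.

Definition dNf (B r : R) : R :=
  (64 * r + (B ^ 2 * r ^ 2) * (672 - 1872 * r + 1024 * r ^ 2)
   + (B ^ 2 * r ^ 2) ^ 2 * (-400 + 1020 * r - 576 * r ^ 2)
   + (B ^ 2 * r ^ 2) ^ 3 * (90 - 259 * r + 192 * r ^ 2)) / r.

Lemma Nf_derivative B r : 0 < r -> derivable_pt_lim (Nf B) r (dNf B r).
Proof.
by move=> hr; apply/is_derive_Reals; rewrite /Nf /dNf; auto_derive; [exact: I | field; lra].
Qed.

Lemma dNf_pos B r : 1 < r -> 0 < Zf B r -> 0 < dNf B r.
Proof.
rewrite /dNf /Zf => h1 h2; set u := B ^ 2 * r ^ 2 in h2 *.
have hu0 : 0 <= u by apply: Rmult_le_pos; apply: pow2_ge_0.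
have hr : 3 / 2 < r by nra.
have hu : u * (6 * r - 5) < 4 * (2 * r - 3) by nra.
have hu43 : u < 4 / 3 by nra.
have h2' : 0 <= u * ((672 - 1872 * r + 1024 * r ^ 2) + u * (-400 + 1020 * r - 576 * r ^ 2)).
  by apply: Rmult_le_pos; nra.
have h3 : 0 <= u ^ 3 * (90 - 259 * r + 192 * r ^ 2).
  by apply: Rmult_le_pos; [apply: pow_le | ]; nra.
by apply: Rdiv_lt_0_compat; nra.
Qed.

Lemma Nf_increasing B a b : 1 <= a -> (forall r, a < r < b -> 0 < Zf B r) ->
  forall x y, a <= x -> x < y -> y <= b -> Nf B x < Nf B y.
Proof.
move=> ha hZ x y hx hxy hy.
have [c [e hc]] := MVT_cor2 (Nf B) (dNf B) x y hxy (fun c hc => Nf_derivative B c ltac:(lra)).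
have hd := dNf_pos B c ltac:(lra) (hZ c ltac:(lra)); nra.
Qed.

Section PositiveField.

Variable B : R.
Hypothesis B_pos : 0 < B.
Hypothesis B_small : B ^ 2 * (169 + 38 * sqrt 19) < 48.

Lemma Zf_roots : exists r1 r2, 3 / 2 < r1 < rB /\ rB < r2 /\ Zf B r1 = 0 /\ Zf B r2 = 0.
Proof.
have h19 := sqrt19_bounds; have hZrB := Zf_rB_pos B B_small.
have hB2 : 0 < B ^ 2 by nra.
have hB6 : B ^ 2 < 1 / 6 by nra.
have hrB : 2 < rB < 3 by rewrite /rB; lra.
have [r1 [hr1 hZ1]] : exists r1, 3 / 2 < r1 < rB /\ Zf B r1 = 0.
  by apply: IVT_strict; [exact: Zf_continuous | lra | split=> //; rewrite /Zf; nra].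
(* at [R = 2 / B^2 + 1] the cubic term already dominates *)
set R := 2 / B ^ 2 + 1.
have hR : B ^ 2 * R = 2 + B ^ 2 by rewrite /R; field; lra.
have hR13 : 13 < R.
  have : 12 < 2 / B ^ 2 by apply: (Rmult_lt_reg_r (B ^ 2)) => //; field_simplify; lra.
  by rewrite /R; lra.
have [r2 [hr2 hZ2]] : exists r2, rB < r2 < R /\ - Zf B r2 = 0.
  apply: (IVT_strict (fun r => - Zf B r)); [exact: continuity_opp (Zf_continuous B) | lra |].
  split; [lra | rewrite /Zf].
  have -> : B ^ 2 * R ^ 2 * (3 / 2 * R - 5 / 4) = (2 + B ^ 2) * R * (3 / 2 * R - 5 / 4).
    by rewrite -hR; ring.
  nra.
by exists r1, r2; repeat split; lra.
Qed.

Lemma Zf_pos_iff r1 r2 : 3 / 2 < r1 < r2 -> Zf B r1 = 0 -> Zf B r2 = 0 ->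
  forall r, (1 < r /\ 0 < Zf B r) <-> (r1 < r /\ r < r2).
Proof.
move=> hr h1 h2 r; rewrite (Zf_factor B r1 r2 h1 h2 ltac:(lra) r).
have hB2 : 0 < 3 * B ^ 2 / 2 by nra.
split=> [[hr1 hZ] | [hr1 hr2]].
- have hc : 0 < (3 * B ^ 2 / 2) * (r - (5 / 6 - r1 - r2)) by apply: Rmult_lt_0_compat; lra.
  have hp : 0 < ((r - r1) * (r - r2)) * - ((3 * B ^ 2 / 2) * (r - (5 / 6 - r1 - r2))).
    by apply: (Rlt_le_trans _ _ _ hZ); right; ring.
  have hneg : (r - r1) * (r - r2) < 0 by nra.
  by have [?|?] := Rlt_or_le r r1; [nra | have [?|?] := Rlt_or_le r r2; nra].
- split; first lra.
  have -> : - (3 * B ^ 2 / 2) * (r - r1) * (r - r2) * (r - (5 / 6 - r1 - r2)) =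
    (3 * B ^ 2 / 2) * ((r - r1) * (r2 - r)) * (r - (5 / 6 - r1 - r2)) by ring.
  by apply: Rmult_lt_0_compat; [apply: Rmult_lt_0_compat|]; nra.
Qed.

Lemma region_threshold_pos : exists r1 r2 rs,
  1 <= r1 /\ r1 < rs < r2 /\ Nf B rs = 0 /\
  (forall r, (1 < r /\ 0 < Zf B r) <-> (r1 < r /\ r < r2)) /\
  (forall rc, r1 < rc -> rc < rs -> Nf B rc < 0) /\
  (forall rc, rs < rc -> rc < r2 -> 0 < Nf B rc).
Proof.
have [r1 [r2 [hr1 [hr2 [hZ1 hZ2]]]]] := Zf_roots.
have hreg := Zf_pos_iff r1 r2 ltac:(lra) hZ1 hZ2.
have hN1 : Nf B r1 < 0 by apply: (proj1 (Nf_sign_at_Zf_root B r1 _ _)); lra.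
have hN2 : 0 < Nf B r2 by apply: (proj2 (Nf_sign_at_Zf_root B r2 _ _)); lra.
have hmono := Nf_increasing B r1 r2 ltac:(lra) (fun r h => proj2 (proj2 (hreg r) h)).
have [rs [hrs hNs]] := IVT_strict (Nf B) r1 r2 (Nf_continuous B) ltac:(lra) (conj hN1 hN2).
have [hlo hhi] := increasing_sign (Nf B) r1 r2 rs hmono hrs hNs.
by exists r1, r2, rs; repeat split=> //; lra.
Qed.

End PositiveField.

Lemma circular_region_threshold B : 0 <= B -> B < Bn ->
  exists (r1 : R) (r2 : Rbar),
    1 <= r1 /\ (B = 0 <-> r2 = p_infty) /\
    (forall r, (1 < r /\ 0 < Zf B r) <-> (r1 < r /\ Rbar_lt r r2)) /\
    exists rs, r1 < rs /\ Rbar_lt rs r2 /\ Nf B rs = 0 /\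
      (forall rc, r1 < rc -> rc < rs -> Nf B rc < 0) /\
      (forall rc, rs < rc -> Rbar_lt rc r2 -> 0 < Nf B rc) /\
      (B = 0 -> rs = 3).
Proof.
move=> hB0 hBn; have [-> | hB] := Req_dec B 0.
  have eZ r : Zf 0 r = 2 * r - 3 by rewrite /Zf; ring.
  have eN r : Nf 0 r = 64 * (r - 3) by rewrite /Nf; ring.
  exists (3 / 2), p_infty; split; [lra | split; [tauto | split]].
    by move=> r; rewrite eZ /=; lra.
  by exists 3; rewrite /=; repeat split=> *; rewrite ?eN; lra.
have [r1 [r2 [rs [hr1 [hrs [hNs [hreg [hlo hhi]]]]]]]] :=
  region_threshold_pos B ltac:(lra) (lt_Bn_sqr B hB0 hBn).
exists r1, (Rbar.Finite r2); split=> //; split; first by split=> // e; lra.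
split; first by move=> r; rewrite hreg.
by exists rs; rewrite /=; repeat split=> //; try lra; move=> e.
Qed.

(** * The effective potential and the circular orbits *)

Ltac refute_zero_product H :=
  match type of H with
  | ?a * ?b = 0 => apply Rmult_integral in H; destruct H as [H|H]; refute_zero_product H
  | _ => idtac
  end.

Ltac solve_nonzero :=
  repeat split; try (let Hc := fresh in intro Hc; refute_zero_product Hc; try lra; try nra).

Lemma inv_in_01 r : 1 < r -> 0 < / r < 1.
Proof.
move=> h; split; first by apply: Rinv_0_lt_compat; lra.
by rewrite -Rinv_1; apply: Rinv_lt_contravar; lra.
Qed.

Lemma magnetic_factor_ge1 B r s : 0 <= s -> 1 <= 1 + B ^ 2 / 4 * r ^ 2 * s.
Proof.
move=> hs; have hB := pow2_ge_0 B; have hr := pow2_ge_0 r.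
have : 0 <= B ^ 2 / 4 * r ^ 2 * s by apply: Rmult_le_pos; [apply: Rmult_le_pos|]; lra.
lra.
Qed.

Lemma Lam_ge1 B r th : 1 <= Lam B r th.
Proof. exact: magnetic_factor_ge1 _ _ _ (pow2_ge_0 _). Qed.

Lemma bf_ge1 B r : 1 <= bf B r.
Proof. by have := magnetic_factor_ge1 B r 1; rewrite /bf; lra. Qed.

Definition Vs (B L E r s : R) : R :=
  L ^ 2 * (1 + B ^ 2 / 4 * r ^ 2 * s) ^ 2 / (2 * r ^ 2 * s)
  - E ^ 2 / (2 * (1 + B ^ 2 / 4 * r ^ 2 * s) ^ 2 * Gam r).

Lemma Veff_Vs B L E r th : Veff B L E r th = Vs B L E r (sin th ^ 2).
Proof. reflexivity. Qed.

Definition dVs_dr (B L E r s : R) : R :=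
  let La := 1 + B ^ 2 / 4 * r ^ 2 * s in
  L ^ 2 * La * (B ^ 2 / 4 * r ^ 2 * s - 1) / (s * r ^ 3)
  + E ^ 2 * (B ^ 2 * r * s * (1 - 1 / r) + La / r ^ 2) / (2 * La ^ 3 * (1 - 1 / r) ^ 2).

Definition dVs_ds (B L E r s : R) : R :=
  let La := 1 + B ^ 2 / 4 * r ^ 2 * s in
  L ^ 2 * La * (B ^ 2 / 4 * r ^ 2 * s - 1) / (2 * r ^ 2 * s ^ 2)
  + E ^ 2 * (B ^ 2 / 4) * r ^ 2 / (La ^ 3 * (1 - 1 / r)).

Lemma is_derive_Vs_r B L E r s : 1 < r -> 0 < s ->
  is_derive (fun x => Vs B L E x s) r (dVs_dr B L E r s).
Proof.
move=> hr hs; have hLam := magnetic_factor_ge1 B r s (Rlt_le _ _ hs); have hinv := inv_in_01 r hr.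
by rewrite /Vs /dVs_dr /Gam; auto_derive; [solve_nonzero | field; solve_nonzero].
Qed.

Lemma is_derive_Vs_s B L E r s : 1 < r -> 0 < s ->
  is_derive (fun t => Vs B L E r t) s (dVs_ds B L E r s).
Proof.
move=> hr hs; have hLam := magnetic_factor_ge1 B r s (Rlt_le _ _ hs); have hinv := inv_in_01 r hr.
by rewrite /Vs /dVs_ds /Gam; auto_derive; [solve_nonzero | field; solve_nonzero].
Qed.

Lemma is_derive_sin_sqr y : is_derive (fun x => sin x ^ 2) y (2 * sin y * cos y).
Proof. auto_derive; [exact I | ring]. Qed.

Lemma is_derive_Veff_th B L E r th : 1 < r -> sin th <> 0 ->
  is_derive (fun x => Veff B L E r x) th (2 * sin th * cos th * dVs_ds B L E r (sin th ^ 2)).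
Proof.
move=> hr hth.
exact: (is_derive_comp (fun t => Vs B L E r t) (fun x => sin x ^ 2) th _ _
  (is_derive_Vs_s B L E r _ hr (pow2_gt_0 _ hth)) (is_derive_sin_sqr th)).
Qed.

Lemma circular_bounds B r : 1 < r -> 0 < Zf B r -> B ^ 2 * r ^ 2 < 4 / 3 /\ 3 / 2 < r.
Proof.
rewrite /Zf => h1 h2; have : 0 <= B ^ 2 * r ^ 2 by apply: Rmult_le_pos; apply: pow2_ge_0.
by split; nra.
Qed.

Lemma Lc_sqr B rc : 1 < rc -> 0 < Zf B rc ->
  Lc B rc ^ 2 = rc ^ 2 / bf B rc ^ 2 * ((4 * (bf B rc - 1) * (rc - 1) + bf B rc) / Zf B rc).
Proof.
move=> h1 hZ; have hb := bf_ge1 B rc.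
rewrite /Lc Rpow_mult_distr pow2_sqrt; first by field; lra.
by apply: Rmult_le_pos; [nra | left; apply: Rinv_0_lt_compat].
Qed.

Lemma Ec_sqr B rc : 1 < rc -> 0 < Zf B rc ->
  Ec B rc ^ 2 = bf B rc ^ 2 * (rc - 1) ^ 2 * ((4 - B ^ 2 * rc ^ 2) / (2 * rc * Zf B rc)).
Proof.
move=> h1 hZ; have [hu hr] := circular_bounds B rc h1 hZ.
rewrite /Ec Rpow_mult_distr pow2_sqrt; first by rewrite !Rpow_mult_distr.
by apply: Rmult_le_pos; [lra | left; apply: Rinv_0_lt_compat; nra].
Qed.

Section CircularOrbit.

Variables B rc : R.
Hypothesis rc_gt1 : 1 < rc.
Hypothesis Zf_rc_pos : 0 < Zf B rc.

Local Notation L := (Lc B rc).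
Local Notation E := (Ec B rc).

Let inv_rc := inv_in_01 rc rc_gt1.

Lemma dVs_dr_circular : dVs_dr B L E rc 1 = 0.
Proof.
rewrite /dVs_dr Lc_sqr // Ec_sqr // /bf; have hZ := Zf_rc_pos; rewrite /Zf in hZ *.
by simpl in *; field; solve_nonzero.
Qed.

Lemma dVs_ds_circular : -2 * dVs_ds B L E rc 1 = (2 - bf B rc) / Zf B rc.
Proof.
rewrite /dVs_ds Lc_sqr // Ec_sqr // /bf; have hZ := Zf_rc_pos; rewrite /Zf in hZ *.
by simpl in *; field; solve_nonzero.
Qed.

Lemma dVs_drr_circular :
  is_derive (fun x => dVs_dr B L E x 1) rc
    (Nf B rc / (64 * rc ^ 2 * (rc - 1) * bf B rc ^ 2 * Zf B rc)).
Proof.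
rewrite /dVs_dr Lc_sqr // Ec_sqr // /bf /Nf; have hZ := Zf_rc_pos; rewrite /Zf in hZ *.
by simpl in *; auto_derive; [solve_nonzero | field; solve_nonzero].
Qed.

Lemma Vs_circular : Vs B L E rc 1 = - 1 / 2.
Proof.
rewrite /Vs Lc_sqr // Ec_sqr // /bf /Gam; have hZ := Zf_rc_pos; rewrite /Zf in hZ *.
by simpl in *; field; solve_nonzero.
Qed.

End CircularOrbit.

(** * Partial derivatives of the Hamiltonian *)

Lemma inord_neq (a b : nat) : (a < 4)%N -> (b < 4)%N -> a <> b -> (inord a : 'I_4) != inord b.
Proof. by move=> ha hb hab; apply/eqP => /(congr1 val); rewrite /= !inordK. Qed.

Lemma upd_same w i x : upd w i x i = x.
Proof. by rewrite /upd eqxx. Qed.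

Lemma upd_diff w i j x : j != i -> upd w i x j = w j.
Proof. by move=> h; rewrite /upd (negbTE h). Qed.

Ltac simpl_upd := repeat (rewrite upd_same || (rewrite upd_diff; [|by apply inord_neq])).

Lemma eq_point_pr rc : eq_point rc (inord 0) = 0.
Proof. by rewrite /eq_point !(negbTE (inord_neq _ _ _ _ _)). Qed.

Lemma eq_point_pth rc : eq_point rc (inord 1) = 0.
Proof. by rewrite /eq_point !(negbTE (inord_neq _ _ _ _ _)). Qed.

Lemma eq_point_r rc : eq_point rc (inord 2) = rc.
Proof. by rewrite /eq_point eqxx. Qed.

Lemma eq_point_th rc : eq_point rc (inord 3) = PI / 2.
Proof. by rewrite /eq_point (negbTE (inord_neq _ _ _ _ _)) // eqxx. Qed.

Ltac simpl_eq_point := rewrite ?eq_point_pr ?eq_point_pth ?eq_point_r ?eq_point_th.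

Definition Pf (B r th : R) : R := Gam r / (2 * Lam B r th ^ 2).
Definition Qf (B r th : R) : R := / (2 * r ^ 2 * Lam B r th ^ 2).

Definition Hcoord (B L E pr pth r th : R) : R :=
  pr ^ 2 * Pf B r th + pth ^ 2 * Qf B r th + Veff B L E r th.

Lemma Ham_Hcoord B L E w :
  Ham B L E w = Hcoord B L E (w (inord 0)) (w (inord 1)) (w (inord 2)) (w (inord 3)).
Proof. by rewrite /Ham /Hcoord /Pf /Qf /Veff /Rdiv; ring. Qed.

Lemma pderiv_local i F w G :
  locally (w i) (fun x => F (upd w i x) = G x) -> pderiv i F w = Derive G (w i).
Proof. exact: Derive_ext_loc. Qed.

Lemma locally_of_ball x d (P : R -> Prop) :
  0 < d -> (forall y, Rabs (y - x) < d -> P y) -> locally x P.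
Proof. by move=> hd h; exists (mkposreal d hd) => y; apply: h. Qed.

Lemma pderiv_even i F w a c :
  w i = 0 -> (forall x, F (upd w i x) = x ^ 2 * a + c) -> pderiv i F w = 0.
Proof.
move=> h0 h; rewrite (pderiv_local _ _ _ (fun x => x ^ 2 * a + c)); last exact: filter_forall.
by rewrite h0; apply: is_derive_unique; auto_derive => //; ring.
Qed.

Lemma pderiv_Ham_pr B L E w :
  pderiv (inord 0) (Ham B L E) w = 2 * w (inord 0) * Pf B (w (inord 2)) (w (inord 3)).
Proof.
rewrite (pderiv_local _ _ _ (fun x => x ^ 2 * Pf B (w (inord 2)) (w (inord 3))
  + (w (inord 1) ^ 2 * Qf B (w (inord 2)) (w (inord 3)) + Veff B L E (w (inord 2)) (w (inord 3))))).
  by apply: is_derive_unique; auto_derive => //; ring.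
by apply: filter_forall => x; rewrite Ham_Hcoord; simpl_upd; rewrite /Hcoord; ring.
Qed.

Lemma pderiv_Ham_pth B L E w :
  pderiv (inord 1) (Ham B L E) w = 2 * w (inord 1) * Qf B (w (inord 2)) (w (inord 3)).
Proof.
rewrite (pderiv_local _ _ _ (fun x => x ^ 2 * Qf B (w (inord 2)) (w (inord 3))
  + (w (inord 0) ^ 2 * Pf B (w (inord 2)) (w (inord 3)) + Veff B L E (w (inord 2)) (w (inord 3))))).
  by apply: is_derive_unique; auto_derive => //; ring.
by apply: filter_forall => x; rewrite Ham_Hcoord; simpl_upd; rewrite /Hcoord; ring.
Qed.

Section PositionGradient.

Variables (B L E pr pth r th : R).
Hypotheses (r_gt1 : 1 < r) (sin_th_neq0 : sin th <> 0).

Lemma Derive_Hcoord_r :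
  Derive (fun y => Hcoord B L E pr pth y th) r =
  pr ^ 2 * Derive (fun y => Pf B y th) r + pth ^ 2 * Derive (fun y => Qf B y th) r
  + dVs_dr B L E r (sin th ^ 2).
Proof.
have hP : ex_derive (fun y => Pf B y th) r.
  by rewrite /Pf /Lam /Gam; auto_derive; solve_nonzero.
have hQ : ex_derive (fun y => Qf B y th) r.
  by rewrite /Qf /Lam; auto_derive; solve_nonzero.
have hV := is_derive_Vs_r B L E r (sin th ^ 2) r_gt1 (pow2_gt_0 _ sin_th_neq0).
rewrite /Hcoord Derive_plus; first rewrite Derive_plus.
- by rewrite !Derive_scal (is_derive_unique _ _ _ hV).
- exact: ex_derive_scal.
- exact: ex_derive_scal.
- by apply: ex_derive_plus; apply: ex_derive_scal.
- by eexists; exact: hV.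
Qed.

Lemma Derive_Hcoord_th :
  Derive (fun y => Hcoord B L E pr pth r y) th =
  pr ^ 2 * Derive (fun y => Pf B r y) th + pth ^ 2 * Derive (fun y => Qf B r y) th
  + 2 * sin th * cos th * dVs_ds B L E r (sin th ^ 2).
Proof.
have hP : ex_derive (fun y => Pf B r y) th.
  by rewrite /Pf /Lam /Gam; auto_derive; solve_nonzero.
have hQ : ex_derive (fun y => Qf B r y) th.
  by rewrite /Qf /Lam; auto_derive; solve_nonzero.
have hV := is_derive_Veff_th B L E r th r_gt1 sin_th_neq0.
rewrite /Hcoord Derive_plus; first rewrite Derive_plus.
- by rewrite !Derive_scal (is_derive_unique _ _ _ hV).
- exact: ex_derive_scal.
- exact: ex_derive_scal.
- by apply: ex_derive_plus; apply: ex_derive_scal.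
- by eexists; exact: hV.
Qed.

End PositionGradient.

Lemma pderiv_Ham_r B L E w : 1 < w (inord 2) -> sin (w (inord 3)) <> 0 ->
  pderiv (inord 2) (Ham B L E) w =
  w (inord 0) ^ 2 * Derive (fun y => Pf B y (w (inord 3))) (w (inord 2))
  + w (inord 1) ^ 2 * Derive (fun y => Qf B y (w (inord 3))) (w (inord 2))
  + dVs_dr B L E (w (inord 2)) (sin (w (inord 3)) ^ 2).
Proof.
move=> hr hs; rewrite -Derive_Hcoord_r //; apply: Derive_ext => y.
by rewrite Ham_Hcoord; simpl_upd.
Qed.

Lemma pderiv_Ham_th B L E w : 1 < w (inord 2) -> sin (w (inord 3)) <> 0 ->
  pderiv (inord 3) (Ham B L E) w =
  w (inord 0) ^ 2 * Derive (fun y => Pf B (w (inord 2)) y) (w (inord 3))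
  + w (inord 1) ^ 2 * Derive (fun y => Qf B (w (inord 2)) y) (w (inord 3))
  + 2 * sin (w (inord 3)) * cos (w (inord 3)) * dVs_ds B L E (w (inord 2)) (sin (w (inord 3)) ^ 2).
Proof.
move=> hr hs; rewrite -Derive_Hcoord_th //; apply: Derive_ext => y.
by rewrite Ham_Hcoord; simpl_upd.
Qed.

Lemma sin_pos_near_PI2 x : Rabs (x - PI / 2) < 1 -> 0 < sin x.
Proof. by move=> /Rabs_def2 h; have hpi := PI2_1; apply: sin_gt_0; lra. Qed.

Lemma Derive_comp_sin_sqr_PI2 f :
  ex_derive f 1 -> Derive (fun x => f (sin x ^ 2)) (PI / 2) = 0.
Proof.
move=> hf; rewrite Derive_comp.
- by rewrite (is_derive_unique _ _ _ (is_derive_sin_sqr _)) cos_PI2; ring.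
- by rewrite sin_PI2 pow1.
- by eexists; apply: is_derive_sin_sqr.
Qed.

Lemma Derive_sin_cos_comp_sin_sqr_PI2 g : ex_derive g 1 ->
  Derive (fun x => 2 * sin x * cos x * g (sin x ^ 2)) (PI / 2) = -2 * g 1.
Proof.
move=> hg; rewrite Derive_mult.
- rewrite (is_derive_unique (fun x => 2 * sin x * cos x) (PI / 2) (-2)).
    by rewrite cos_PI2 sin_PI2 pow1; ring.
  by auto_derive => //; rewrite cos_PI2 sin_PI2; ring.
- by auto_derive.
- apply: (ex_derive_comp g (fun x => sin x ^ 2)).
    by rewrite sin_PI2 pow1.
  by eexists; apply: is_derive_sin_sqr.
Qed.

Section Hessian.

Variables B L E rc : R.
Hypothesis rc_gt1 : 1 < rc.

Local Notation H := (Ham B L E).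
Local Notation v := (eq_point rc).

Let inv_rc := inv_in_01 rc rc_gt1.
Let Lam_rc_ge1 := magnetic_factor_ge1 B rc 1 ltac:(lra).

Lemma grad_pr : pderiv (inord 0) H v = 0.
Proof. by rewrite pderiv_Ham_pr eq_point_pr; ring. Qed.

Lemma grad_pth : pderiv (inord 1) H v = 0.
Proof. by rewrite pderiv_Ham_pth eq_point_pth; ring. Qed.

Lemma grad_r : pderiv (inord 2) H v = dVs_dr B L E rc 1.
Proof.
by rewrite pderiv_Ham_r; simpl_eq_point; rewrite ?sin_PI2 ?pow1 //; ring.
Qed.

Lemma grad_th : pderiv (inord 3) H v = 0.
Proof.
by rewrite pderiv_Ham_th; simpl_eq_point; rewrite ?cos_PI2 ?sin_PI2 //; ring.
Qed.

Lemma hess_pr_pr : pderiv (inord 0) (pderiv (inord 0) H) v = 2 * Pf B rc (PI / 2).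
Proof.
rewrite (pderiv_local _ _ _ (fun x => 2 * x * Pf B rc (PI / 2))).
  by apply: is_derive_unique; auto_derive => //; ring.
by apply: filter_forall => x; rewrite pderiv_Ham_pr; simpl_upd; simpl_eq_point.
Qed.

Lemma hess_pth_pth : pderiv (inord 1) (pderiv (inord 1) H) v = 2 * Qf B rc (PI / 2).
Proof.
rewrite (pderiv_local _ _ _ (fun x => 2 * x * Qf B rc (PI / 2))).
  by apply: is_derive_unique; auto_derive => //; ring.
by apply: filter_forall => x; rewrite pderiv_Ham_pth; simpl_upd; simpl_eq_point.
Qed.

Lemma hess_pr_offdiag i : (i < 4)%N -> i <> 0%N ->
  pderiv (inord i) (pderiv (inord 0) H) v = 0.
Proof.
move=> hi hi0; rewrite (pderiv_local _ _ _ (fun _ => 0)) ?Derive_const //.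
apply: filter_forall => x; rewrite pderiv_Ham_pr upd_diff; last by apply: inord_neq => // /esym.
by rewrite eq_point_pr; ring.
Qed.

Lemma hess_pth_offdiag i : (i < 4)%N -> i <> 1%N ->
  pderiv (inord i) (pderiv (inord 1) H) v = 0.
Proof.
move=> hi hi1; rewrite (pderiv_local _ _ _ (fun _ => 0)) ?Derive_const //.
apply: filter_forall => x; rewrite pderiv_Ham_pth (upd_diff _ _ (inord 1)).
  by rewrite eq_point_pth; ring.
by apply: inord_neq => // /esym.
Qed.

(* Along a momentum axis the position gradient is even in the momentum, which vanishes at [v]. *)
Lemma hess_pr_r : pderiv (inord 0) (pderiv (inord 2) H) v = 0.
Proof.
apply: (pderiv_even _ _ _ (Derive (fun y => Pf B y (PI / 2)) rc) (dVs_dr B L E rc 1)).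
  exact: eq_point_pr.
by move=> x; rewrite pderiv_Ham_r; simpl_upd; simpl_eq_point; rewrite ?sin_PI2 ?pow1 //; ring.
Qed.

Lemma hess_pth_r : pderiv (inord 1) (pderiv (inord 2) H) v = 0.
Proof.
apply: (pderiv_even _ _ _ (Derive (fun y => Qf B y (PI / 2)) rc) (dVs_dr B L E rc 1)).
  exact: eq_point_pth.
by move=> x; rewrite pderiv_Ham_r; simpl_upd; simpl_eq_point; rewrite ?sin_PI2 ?pow1 //; ring.
Qed.

Lemma hess_pr_th : pderiv (inord 0) (pderiv (inord 3) H) v = 0.
Proof.
apply: (pderiv_even _ _ _ (Derive (fun y => Pf B rc y) (PI / 2)) 0).
  exact: eq_point_pr.
by move=> x; rewrite pderiv_Ham_th; simpl_upd; simpl_eq_point; rewrite ?cos_PI2 ?sin_PI2 //; ring.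
Qed.

Lemma hess_pth_th : pderiv (inord 1) (pderiv (inord 3) H) v = 0.
Proof.
apply: (pderiv_even _ _ _ (Derive (fun y => Qf B rc y) (PI / 2)) 0).
  exact: eq_point_pth.
by move=> x; rewrite pderiv_Ham_th; simpl_upd; simpl_eq_point; rewrite ?cos_PI2 ?sin_PI2 //; ring.
Qed.

Lemma hess_r_r :
  pderiv (inord 2) (pderiv (inord 2) H) v = Derive (fun x => dVs_dr B L E x 1) rc.
Proof.
rewrite (pderiv_local _ _ _ (fun x => dVs_dr B L E x 1)) eq_point_r //.
apply: (locally_of_ball _ (rc - 1)); first lra.
move=> x /Rabs_def2 hx; rewrite pderiv_Ham_r; simpl_upd; simpl_eq_point; rewrite ?sin_PI2 ?pow1 //.
- ring.
- lra.
Qed.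

Lemma hess_r_th : pderiv (inord 2) (pderiv (inord 3) H) v = 0.
Proof.
rewrite (pderiv_local _ _ _ (fun _ => 0)) ?Derive_const // eq_point_r.
apply: (locally_of_ball _ (rc - 1)); first lra.
move=> x /Rabs_def2 hx; rewrite pderiv_Ham_th; simpl_upd; simpl_eq_point.
- by rewrite cos_PI2; ring.
- lra.
- by rewrite sin_PI2.
Qed.

Lemma hess_th_r : pderiv (inord 3) (pderiv (inord 2) H) v = 0.
Proof.
rewrite (pderiv_local _ _ _ (fun x => dVs_dr B L E rc (sin x ^ 2))) eq_point_th.
  by apply: Derive_comp_sin_sqr_PI2; rewrite /dVs_dr; auto_derive; simpl in *; solve_nonzero.
apply: (locally_of_ball _ 1); first lra.
move=> x hx; have hsin := sin_pos_near_PI2 x hx.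
rewrite pderiv_Ham_r; simpl_upd; simpl_eq_point; [ring | lra | lra].
Qed.

Lemma hess_th_th : pderiv (inord 3) (pderiv (inord 3) H) v = -2 * dVs_ds B L E rc 1.
Proof.
rewrite (pderiv_local _ _ _ (fun x => 2 * sin x * cos x * dVs_ds B L E rc (sin x ^ 2))) eq_point_th.
  apply: Derive_sin_cos_comp_sin_sqr_PI2.
  by rewrite /dVs_ds; auto_derive; simpl in *; solve_nonzero.
apply: (locally_of_ball _ 1); first lra.
move=> x hx; have hsin := sin_pos_near_PI2 x hx.
rewrite pderiv_Ham_th; simpl_upd; simpl_eq_point; [ring | lra | lra].
Qed.

End Hessian.

(** * Linearization and its characteristic polynomial *)

Definition diag4 (a b c d : R) : 'M[R]_4 := \matrix_(i < 4, j < 4)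
  match nat_of_ord i, nat_of_ord j with
  | 0, 0 => a | 1, 1 => b | 2, 2 => c | 3, 3 => d | _, _ => 0
  end.

Definition symp4 (a b c d : R) : 'M[R]_4 := \matrix_(i < 4, j < 4)
  match nat_of_ord i, nat_of_ord j with
  | 0, 2 => - c | 1, 3 => - d | 2, 0 => a | 3, 1 => b | _, _ => 0
  end.

Lemma Jsymp_mul_diag4 a b c d : (Jsymp *m diag4 a b c d)%R = symp4 a b c d.
Proof.
apply/matrixP => i j; rewrite !mxE !big_ord_recl big_ord0 !mxE.
case: i => [[|[|[|[|i]]]] hi] //; case: j => [[|[|[|[|j]]]] hj] //=.
all: rewrite -?RplusE -?RmultE -?RoppE -?R0E -?R1E; ring.
Qed.

Section CharPoly.
Import GRing.Theory ring.
Local Open Scope ring_scope.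

Lemma char_poly_symp4 (a b c d : R) :
  char_poly (symp4 a b c d) = ('X^2 + (a * c)%:P) * ('X^2 + (b * d)%:P).
Proof.
rewrite /char_poly /char_poly_mx /symp4.
repeat (rewrite (expand_det_row _ ord0) !big_ord_recl big_ord0 /cofactor !mxE /=;
  rewrite ?RoppE ?R0E ?mulr0n ?mulr1n ?polyC0 ?subr0 ?sub0r ?mul0r ?mulr0 ?add0r ?addr0).
by rewrite ?det_mx00 !polyCN !polyCM; ring.
Qed.

End CharPoly.

Lemma saddle_center_of_char_poly (A : 'M[R]_4) p q : p < 0 -> 0 < q ->
  char_poly A = (('X^2 + p%:P) * ('X^2 + q%:P))%R -> saddle_center A.
Proof.
move=> hp hq hA; exists (sqrt (- p)), (sqrt q).
have ep : (sqrt (- p) ^ 2)%R = - p by apply: sqrt_sqrt; lra.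
have eq : (sqrt q ^ 2)%R = q by apply: sqrt_sqrt; lra.
split; [apply: sqrt_lt_R0; lra|]; split; [exact: sqrt_lt_R0|].
by rewrite hA ep eq polyCN GRing.opprK.
Qed.

Lemma center_center_of_char_poly (A : 'M[R]_4) p q : 0 < p -> 0 < q ->
  char_poly A = (('X^2 + p%:P) * ('X^2 + q%:P))%R -> center_center A.
Proof.
move=> hp hq hA; exists (sqrt p), (sqrt q).
have ep : (sqrt p ^ 2)%R = p by apply: sqrt_sqrt; lra.
have eq : (sqrt q ^ 2)%R = q by apply: sqrt_sqrt; lra.
split; [exact: sqrt_lt_R0|]; split; [exact: sqrt_lt_R0|].
by rewrite hA ep eq.
Qed.

Lemma hessian_eq_point B L E rc : 1 < rc ->
  hessian (Ham B L E) (eq_point rc) =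
  diag4 (2 * Pf B rc (PI / 2)) (2 * Qf B rc (PI / 2))
        (Derive (fun x => dVs_dr B L E x 1) rc) (-2 * dVs_ds B L E rc 1).
Proof.
move=> hrc; apply/matrixP => i j; rewrite !mxE.
case: i => i hi; case: j => j hj.
rewrite -[Ordinal hi]inord_val -[Ordinal hj]inord_val /=.
move: hi hj; case: i => [|[|[|[|i]]]] hi; case: j => [|[|[|[|j]]]] hj //=.
all: rewrite ?inordK //=.
- exact: hess_pr_pr.
- exact: hess_pth_offdiag.
- exact: hess_pr_r.
- exact: hess_pr_th.
- exact: hess_pr_offdiag.
- exact: hess_pth_pth.
- exact: hess_pth_r.
- exact: hess_pth_th.
- exact: hess_pr_offdiag.
- exact: hess_pth_offdiag.
- exact: hess_r_r.
- exact: hess_r_th.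
- exact: hess_pr_offdiag.
- exact: hess_pth_offdiag.
- exact: hess_th_r.
- exact: hess_th_th.
Qed.

Lemma Pf_pos B r th : 1 < r -> 0 < Pf B r th.
Proof.
move=> hr; have hLam := Lam_ge1 B r th; have hinv := inv_in_01 r hr.
by apply: Rdiv_lt_0_compat; rewrite /Gam; nra.
Qed.

Lemma Qf_pos B r th : 0 < r -> 0 < Qf B r th.
Proof.
move=> hr; have hLam := Lam_ge1 B r th; apply: Rinv_0_lt_compat.
by apply: Rmult_lt_0_compat; [apply: Rmult_lt_0_compat|]; try apply: pow_lt; lra.
Qed.

Section CircularOrbitStability.

Variables B rc : R.
Hypotheses (rc_gt1 : 1 < rc) (Zf_rc_pos : 0 < Zf B rc).

Local Notation L := (Lc B rc).
Local Notation E := (Ec B rc).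

Lemma circular_fixed_point : fixed_point (Ham B L E) (eq_point rc).
Proof.
case=> k hk; rewrite -[Ordinal hk]inord_val /=.
move: hk; case: k => [|[|[|[|k]]]] hk //.
- exact: grad_pr.
- exact: grad_pth.
- by rewrite grad_r // dVs_dr_circular.
- exact: grad_th.
Qed.

Lemma circular_energy : Ham B L E (eq_point rc) = - 1 / 2.
Proof.
rewrite Ham_Hcoord; simpl_eq_point.
by rewrite /Hcoord Veff_Vs sin_PI2 pow1 Vs_circular //; ring.
Qed.

Definition radial_stiffness : R :=
  Nf B rc / (64 * rc ^ 2 * (rc - 1) * bf B rc ^ 2 * Zf B rc).

Definition radial_frequency_sq : R := 2 * Pf B rc (PI / 2) * radial_stiffness.
Definition polar_frequency_sq : R := 2 * Qf B rc (PI / 2) * ((2 - bf B rc) / Zf B rc).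

Lemma char_poly_circular :
  char_poly (linearization (Ham B L E) (eq_point rc)) =
  (('X^2 + radial_frequency_sq%:P) * ('X^2 + polar_frequency_sq%:P))%R.
Proof.
rewrite /linearization hessian_eq_point // Jsymp_mul_diag4 char_poly_symp4.
by rewrite (is_derive_unique _ _ _ (dVs_drr_circular B rc rc_gt1 Zf_rc_pos)) dVs_ds_circular.
Qed.

Lemma radial_stiffness_sign :
  (Nf B rc < 0 -> radial_stiffness < 0) /\ (0 < Nf B rc -> 0 < radial_stiffness).
Proof.
have hb := bf_ge1 B rc.
have hD : 0 < 64 * rc ^ 2 * (rc - 1) * bf B rc ^ 2 * Zf B rc.
  by repeat apply: Rmult_lt_0_compat; try lra; apply: pow_lt; lra.
rewrite /radial_stiffness /Rdiv; have hD' := Rinv_0_lt_compat _ hD; split; nra.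
Qed.

Lemma polar_stiffness_pos : 0 < (2 - bf B rc) / Zf B rc.
Proof.
have [hu _] := circular_bounds B rc rc_gt1 Zf_rc_pos.
by apply: Rdiv_lt_0_compat => //; rewrite /bf; lra.
Qed.

Lemma circular_saddle_center : Nf B rc < 0 ->
  saddle_center (linearization (Ham B L E) (eq_point rc)).
Proof.
move=> hN; apply: (saddle_center_of_char_poly _ _ _ _ _ char_poly_circular).
- have hP := Pf_pos B rc (PI / 2) rc_gt1; have hK := proj1 radial_stiffness_sign hN.
  by rewrite /radial_frequency_sq; nra.
- have hQ := Qf_pos B rc (PI / 2) ltac:(lra); have hK := polar_stiffness_pos.
  by rewrite /polar_frequency_sq; nra.
Qed.

Lemma circular_center_center : 0 < Nf B rc ->
  center_center (linearization (Ham B L E) (eq_point rc)).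
Proof.
move=> hN; apply: (center_center_of_char_poly _ _ _ _ _ char_poly_circular).
- have hP := Pf_pos B rc (PI / 2) rc_gt1; have hK := proj2 radial_stiffness_sign hN.
  by rewrite /radial_frequency_sq; nra.
- have hQ := Qf_pos B rc (PI / 2) ltac:(lra); have hK := polar_stiffness_pos.
  by rewrite /polar_frequency_sq; nra.
Qed.

End CircularOrbitStability.

(** * The effective potential has a strict minimum at stable orbits *)

Lemma strict_local_min_of_locally (V : R -> R -> R) r0 th0 (P Q : R -> Prop) :
  locally r0 P -> locally th0 Q ->
  (forall r th, P r -> Q th -> (r, th) <> (r0, th0) -> V r0 th0 < V r th) ->
  strict_local_min V r0 th0.
Proof.
move=> [dP hP] [dQ hQ] hV; exists (Rmin dP dQ); split.
  by apply: Rmin_pos; apply: cond_pos.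
move=> r th hr hth; apply: hV; [apply: hP | apply: hQ].
- exact: (Rlt_le_trans _ _ _ hr (Rmin_l _ _)).
- exact: (Rlt_le_trans _ _ _ hth (Rmin_r _ _)).
Qed.

Lemma locally_lt_of_continuity f x eps : continuity_pt f x -> 0 < eps ->
  locally x (fun y => Rabs (f y - f x) < eps).
Proof. by move=> /continuity_pt_locally hf he; apply: (hf (mkposreal eps he)). Qed.

Lemma continuity_pt_of_ex_derive f x : ex_derive f x -> continuity_pt f x.
Proof. by move=> [l /is_derive_Reals hl]; apply: derivable_continuous_pt; exists l. Qed.

Lemma strict_min_of_derivative (phi dphi : R -> R) x0 a c : a < x0 -> 0 < c ->
  (forall x, a < x -> derivable_pt_lim phi x (dphi x)) -> dphi x0 = 0 ->
  derivable_pt_lim dphi x0 c -> locally x0 (fun x => x <> x0 -> phi x0 < phi x).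
Proof.
move=> ha hc hphi hd0 hd.
have [del hdel] := hd (c / 2) ltac:(lra).
have slope : forall x, x <> x0 -> Rabs (x - x0) < del -> 0 < dphi x / (x - x0).
  move=> x hx hx2; have := hdel (x - x0) ltac:(lra) hx2.
  replace (x0 + (x - x0)) with x by ring; rewrite hd0 Rminus_0_r.
  by move=> /Rabs_def2; lra.
apply: (locally_of_ball _ (Rmin del (x0 - a))).
  by apply: Rmin_pos; [apply: cond_pos | lra].
move=> x hx hne.
have /Rabs_def2 [hx1 hx1'] := Rlt_le_trans _ _ _ hx (Rmin_l _ _).
have /Rabs_def2 [hx2 hx2'] := Rlt_le_trans _ _ _ hx (Rmin_r _ _).
have [hlt | hgt] := Rlt_or_le x0 x.
- have [xi [e hxi]] := MVT_cor2 phi dphi x0 x hlt (fun y hy => hphi y ltac:(lra)).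
  have hxi' : Rabs (xi - x0) < del by apply: Rabs_def1; lra.
  have hq := slope xi ltac:(lra) hxi'.
  have : 0 < dphi xi.
    replace (dphi xi) with (dphi xi / (xi - x0) * (xi - x0)) by (field; lra).
    by apply: Rmult_lt_0_compat; lra.
  by move=> h; nra.
- have [xi [e hxi]] := MVT_cor2 phi dphi x x0 ltac:(lra) (fun y hy => hphi y ltac:(lra)).
  have hxi' : Rabs (xi - x0) < del by apply: Rabs_def1; lra.
  have hq := slope xi ltac:(lra) hxi'.
  have : dphi xi < 0.
    replace (dphi xi) with (dphi xi / (xi - x0) * (xi - x0)) by (field; lra).
    by apply: Rmult_pos_neg; lra.
  by move=> h; nra.
Qed.

Lemma cos_neq0_near_PI2 th : Rabs (th - PI / 2) < 1 -> th <> PI / 2 -> cos th <> 0.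
Proof.
move=> /Rabs_def2 h hne; have hpi := PI2_1; rewrite -sin_shift.
have [hl | hl] := Rlt_or_le th (PI / 2).
  by apply: Rgt_not_eq; apply: sin_gt_0; lra.
replace (PI / 2 - th) with (- (th - PI / 2)) by ring; rewrite sin_neg.
have : 0 < sin (th - PI / 2) by apply: sin_gt_0; lra.
lra.
Qed.

Definition Kf (B r : R) : R := B ^ 2 / 4 * r ^ 2.

Definition Gs (B L E r s : R) : R :=
  L ^ 2 * (1 / s - Kf B r ^ 2) / (2 * r ^ 2)
  - E ^ 2 * Kf B r * ((1 + Kf B r) + (1 + Kf B r * s)) /
      (2 * Gam r * (1 + Kf B r * s) ^ 2 * (1 + Kf B r) ^ 2).

Definition Gs_slope (B E r : R) : R := 3 * E ^ 2 * Kf B r ^ 2 / (2 * Gam r * (1 + Kf B r) ^ 2).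

Lemma Kf_ge0 B r : 0 <= Kf B r.
Proof. by have := magnetic_factor_ge1 B r 1 ltac:(lra); rewrite /Kf; lra. Qed.

Lemma Gs_slope_ge0 B E r : 1 < r -> 0 <= Gs_slope B E r.
Proof.
move=> hr; have hK := Kf_ge0 B r; have hinv := inv_in_01 r hr.
rewrite /Gs_slope /Gam; apply: Rmult_le_pos.
  by have hE := pow2_ge_0 E; have hK2 := pow2_ge_0 (Kf B r); nra.
by left; apply: Rinv_0_lt_compat; apply: Rmult_lt_0_compat; [lra | apply: pow_lt; lra].
Qed.

Lemma Vs_polar_split B L E r s : 1 < r -> 0 < s ->
  Vs B L E r s - Vs B L E r 1 = (1 - s) * Gs B L E r s.
Proof.
move=> hr hs; have hK := Kf_ge0 B r; have hinv := inv_in_01 r hr.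
have : 0 <= Kf B r * s by apply: Rmult_le_pos; lra.
move=> hKs; rewrite /Vs /Gs /Gam.
replace (B ^ 2 / 4 * r ^ 2 * s) with (Kf B r * s) by (rewrite /Kf; ring).
replace (B ^ 2 / 4 * r ^ 2 * 1) with (Kf B r) by (rewrite /Kf; ring).
by field; solve_nonzero.
Qed.

Lemma Gs_lower_bound B L E r s : 1 < r -> 0 < s -> s <= 1 ->
  - dVs_ds B L E r 1 - (1 - s) * Gs_slope B E r <= Gs B L E r s.
Proof.
move=> hr hs hs1; have hK := Kf_ge0 B r; have hinv := inv_in_01 r hr.
have hKs : 0 <= Kf B r * s by apply: Rmult_le_pos; lra.
have hKs1 : Kf B r * s <= Kf B r by nra.
have hG : 0 < Gam r by rewrite /Gam; lra.
have e : Gs B L E r s - (- dVs_ds B L E r 1 - (1 - s) * Gs_slope B E r) =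
  L ^ 2 * (1 / s - 1) / (2 * r ^ 2) +
  E ^ 2 * Kf B r ^ 2 * (1 - s) / (2 * Gam r * (1 + Kf B r) ^ 2) *
    (3 - ((1 + Kf B r) + 2 * (1 + Kf B r * s)) / ((1 + Kf B r) * (1 + Kf B r * s) ^ 2)).
  by rewrite /Gs /dVs_ds /Gs_slope; rewrite /Kf /Gam in hK hKs hKs1 hG *; field; solve_nonzero.
have t1 : 0 <= L ^ 2 * (1 / s - 1) / (2 * r ^ 2).
  apply: Rmult_le_pos; [apply: Rmult_le_pos; [apply: pow2_ge_0|] |].
  - have : 1 <= 1 / s by apply: (Rmult_le_reg_r s) => //; field_simplify; lra.
    lra.
  - by left; apply: Rinv_0_lt_compat; nra.
have t2 : 0 <= 3 - ((1 + Kf B r) + 2 * (1 + Kf B r * s)) / ((1 + Kf B r) * (1 + Kf B r * s) ^ 2).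
  suff : ((1 + Kf B r) + 2 * (1 + Kf B r * s)) / ((1 + Kf B r) * (1 + Kf B r * s) ^ 2) <= 3 by lra.
  apply: (Rmult_le_reg_r ((1 + Kf B r) * (1 + Kf B r * s) ^ 2)); first nra.
  by field_simplify; nra.
have t3 : 0 <= E ^ 2 * Kf B r ^ 2 * (1 - s) / (2 * Gam r * (1 + Kf B r) ^ 2).
  apply: Rmult_le_pos; [apply: Rmult_le_pos; [apply: Rmult_le_pos; apply: pow2_ge_0 | lra]|].
  by left; apply: Rinv_0_lt_compat; nra.
nra.
Qed.

Lemma Veff_split B L E r th rc : 1 < r -> sin th <> 0 ->
  Veff B L E r th - Veff B L E rc (PI / 2) =
  cos th ^ 2 * Gs B L E r (sin th ^ 2) + (Vs B L E r 1 - Vs B L E rc 1).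
Proof.
move=> hr hs; rewrite !Veff_Vs sin_PI2 pow1.
have -> : cos th ^ 2 = 1 - sin th ^ 2 by have := sin2_cos2 th; rewrite /Rsqr /=; lra.
by rewrite -Vs_polar_split //; [ring | apply: pow2_gt_0].
Qed.

Lemma Gs_pos B L E r s g M : 0 < g -> 0 < M -> 1 < r -> 0 < s <= 1 ->
  g / 2 < - dVs_ds B L E r 1 -> Gs_slope B E r < M -> 1 - s < g / (2 * M) ->
  0 < Gs B L E r s.
Proof.
move=> hg hM hr [hs0 hs1] hG hslope hs.
have := Gs_lower_bound B L E r s hr hs0 hs1.
have : (1 - s) * Gs_slope B E r <= (1 - s) * M by apply: Rmult_le_compat_l; lra.
have : (1 - s) * M < g / 2.
  replace (g / 2) with (g / (2 * M) * M) by (field; lra).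
  by apply: Rmult_lt_compat_r.
lra.
Qed.

Section StableMinimum.

Variables B rc : R.
Hypotheses (rc_gt1 : 1 < rc) (Zf_rc_pos : 0 < Zf B rc) (Nf_rc_pos : 0 < Nf B rc).

Local Notation L := (Lc B rc).
Local Notation E := (Ec B rc).

Let inv_rc := inv_in_01 rc rc_gt1.

Lemma radial_strict_min : locally rc (fun r => r <> rc -> Vs B L E rc 1 < Vs B L E r 1).
Proof.
apply: (strict_min_of_derivative _ (fun r => dVs_dr B L E r 1) rc 1 (radial_stiffness B rc)).
- exact: rc_gt1.
- exact: (proj2 (radial_stiffness_sign B rc rc_gt1 Zf_rc_pos) Nf_rc_pos).
- by move=> r hr; apply/is_derive_Reals; apply: is_derive_Vs_r; lra.
- exact: dVs_dr_circular.
- by apply/is_derive_Reals; apply: dVs_drr_circular.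
Qed.

Lemma polar_part_pos_near : exists P Q : R -> Prop,
  locally rc P /\ locally (PI / 2) Q /\
  forall r th, P r -> Q th -> 1 < r /\ Rabs (th - PI / 2) < 1 /\ 0 < Gs B L E r (sin th ^ 2).
Proof.
set g := - dVs_ds B L E rc 1; set M := Gs_slope B E rc + 1.
have hg : 0 < g.
  have e := dVs_ds_circular B rc rc_gt1 Zf_rc_pos.
  have hpos := polar_stiffness_pos B rc rc_gt1 Zf_rc_pos.
  by rewrite /g; lra.
have hM : 0 < M by have := Gs_slope_ge0 B E rc rc_gt1; rewrite /M; lra.
have hgM : 0 < g / (2 * M) by apply: Rdiv_lt_0_compat; lra.
have cG : continuity_pt (fun r => - dVs_ds B L E r 1) rc.
  by apply: continuity_pt_of_ex_derive; rewrite /dVs_ds; auto_derive; simpl in *; solve_nonzero.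
have cM : continuity_pt (Gs_slope B E) rc.
  apply: continuity_pt_of_ex_derive; rewrite /Gs_slope /Kf /Gam.
  by auto_derive; simpl in *; solve_nonzero.
have cS : continuity_pt (fun th => sin th ^ 2) (PI / 2).
  by apply: continuity_pt_of_ex_derive; eexists; apply: is_derive_sin_sqr.
exists (fun r => (Rabs (- dVs_ds B L E r 1 - g) < g / 2 /\
                 Rabs (Gs_slope B E r - Gs_slope B E rc) < 1) /\ 1 < r),
       (fun th => Rabs (th - PI / 2) < 1 /\ Rabs (sin th ^ 2 - sin (PI / 2) ^ 2) < g / (2 * M)).
split; [|split].
- apply: filter_and; [apply: filter_and|].
  + by apply: (locally_lt_of_continuity _ _ _ cG); lra.
  + exact: (locally_lt_of_continuity _ _ _ cM Rlt_0_1).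
  + exact: (open_gt 1 rc rc_gt1).
- apply: filter_and.
  + exact: (locally_of_ball _ 1 _ Rlt_0_1 (fun _ h => h)).
  + exact: (locally_lt_of_continuity _ _ _ cS hgM).
move=> r th [[/Rabs_def2 hGr /Rabs_def2 hMr] hr1] [hth /Rabs_def2 hS].
rewrite sin_PI2 pow1 in hS; do 2 (split=> //).
have hsin := sin_pos_near_PI2 th hth.
have eM : M = Gs_slope B E rc + 1 by [].
apply: (Gs_pos _ _ _ _ _ g M) => //; try lra.
by split; [apply: pow_lt | have hb := SIN_bound th; nra].
Qed.

Lemma circular_strict_local_min : strict_local_min (Veff B L E) rc (PI / 2).
Proof.
have [P [Q [hP [hQ hPQ]]]] := polar_part_pos_near.
apply: (strict_local_min_of_locally _ _ _ _ _ (filter_and _ _ radial_strict_min hP) hQ).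
move=> r th [hmin hPr] hQth hne; have [hr1 [hth hGs]] := hPQ r th hPr hQth.
have hsin := sin_pos_near_PI2 th hth.
apply/Rlt_0_minus; rewrite (Veff_split B L E r th rc hr1 (Rgt_not_eq _ _ hsin)).
have [er | hr] := Req_dec r rc.
- subst r; have hth' : th <> PI / 2 by move=> e; apply: hne; rewrite e.
  have hc := pow2_gt_0 _ (cos_neq0_near_PI2 th hth hth'); nra.
- have hV := hmin hr; have hc := pow2_ge_0 (cos th); nra.
Qed.

End StableMinimum.

Theorem mainTheorem2 (B : R) (hB0 : 0 <= B) (hBn : B < Bn) :
  (forall rc : R, 1 < rc -> 0 < Zf B rc ->
     fixed_point (Ham B (Lc B rc) (Ec B rc)) (eq_point rc) /\
     Ham B (Lc B rc) (Ec B rc) (eq_point rc) = - 1 / 2) /\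
  exists (r1 : R) (r2 : Rbar),
    1 <= r1 /\ (B = 0 <-> r2 = p_infty) /\
    (forall r : R, (1 < r /\ 0 < Zf B r) <-> (r1 < r /\ Rbar_lt r r2)) /\
    exists rs : R,
      r1 < rs /\ Rbar_lt rs r2 /\ Nf B rs = 0 /\
      (forall rc : R, r1 < rc -> rc < rs ->
         saddle_center (linearization (Ham B (Lc B rc) (Ec B rc)) (eq_point rc))) /\
      (forall rc : R, rs < rc -> Rbar_lt rc r2 ->
         center_center (linearization (Ham B (Lc B rc) (Ec B rc)) (eq_point rc)) /\
         strict_local_min (Veff B (Lc B rc) (Ec B rc)) rc (PI / 2)) /\
      (B = 0 -> rs = 3).
Proof.
split.
  by move=> rc h1 hZ; split; [exact: circular_fixed_point | exact: circular_energy].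
have [r1 [r2 [hr1 [hinf [hreg [rs [hrs1 [hrs2 [hNs [hlo [hhi h3]]]]]]]]]]] :=
  circular_region_threshold B hB0 hBn.
exists r1, r2; split=> //; split=> //; split=> //; exists rs; split=> //; split=> //.
split=> //; split; [|split=> //].
- move=> rc h1 h2.
  have [hrc hZ] : 1 < rc /\ 0 < Zf B rc by apply/hreg; split=> //; exact: (Rbar_lt_trans rc rs r2).
  exact: (circular_saddle_center B rc hrc hZ (hlo rc h1 h2)).
- move=> rc h1 h2.
  have [hrc hZ] : 1 < rc /\ 0 < Zf B rc by apply/hreg; split=> //; lra.
  have hN := hhi rc h1 h2.
  by split; [exact: (circular_center_center B rc hrc hZ hN)
            | exact: (circular_strict_local_min B rc hrc hZ hN)].
Qed.
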